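(* In the setting below, if $$\sum_{t\in\mathcal K}\|Z^\top f(x_t)\|_2\le \sum_{t\in\mathcal K^c}\|Z^\top f(x_t)\|_2\qquad\text{for all } Z\in\mathbb{R}^{m\times n},$$ then $\bar A$ is a global minimizer of $\min_{A\in\mathbb{R}^{n\times m}}\sum_{t=0}^{T-1}\|(\bar A-A)f(x_t)+\bar d_t\|_2$.
   Context: $f:\mathbb{R}^n\to\mathbb{R}^m$ is given, $\bar A\in\mathbb{R}^{n\times m}$, $\bar d_0,\dots,\bar d_{T-1}\in\mathbb{R}^n$, and $x_0=0_n$, $x_{t+1}=\bar A f(x_t)+\bar d_t$ for $t=0,\dots,T-1$. $\mathcal K:=\{t\in\{0,\dots,T-1\}:\bar d_t\ne 0\}$, $\mathcal K^c:=\{0,\dots,T-1\}\setminus\mathcal K$. *)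

From HB Require Import structures.
From mathcomp Require Import all_boot all_order all_algebra.
Set Implicit Arguments. Unset Strict Implicit. Unset Printing Implicit Defensive.
Import Order.TTheory GRing.Theory Num.Theory.
Local Open Scope ring_scope.

Definition norm2 (R : rcfType) (k : nat) (v : 'cV[R]_k) : R :=
  Num.sqrt (\sum_(i < k) v i 0 ^+ 2).

Fixpoint traj (R : rcfType) (n m : nat) (f : 'cV[R]_n -> 'cV[R]_m)
    (Abar : 'M[R]_(n, m)) (d : nat -> 'cV[R]_n) (t : nat) : 'cV[R]_n :=
  match t with
  | 0 => 0
  | t'.+1 => Abar *m f (traj f Abar d t') + d t'
  end.

(* At [A = Abar] the residuals are just the [d t], which vanish off K.
   For another [A] put [g t := (Abar - A) f(x_t)]: off K the residual is
   [g t], while on K the triangle inequality gives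
   [|d t| <= |g t + d t| + |g t|].  Summing, the loss at [A] exceeds the loss
   at [Abar] by at least [sum_(t notin K) |g t| - sum_(t in K) |g t|], which
   is nonnegative by the hypothesis applied to [Z := (Abar - A)^T]. *)
From HB Require Import structures.
From mathcomp Require Import all_boot all_order all_algebra.
From mathcomp Require Import ring.
Import Order.TTheory GRing.Theory Num.Theory.
Local Open Scope ring_scope.

Section EuclideanNorm.
Variables (R : rcfType) (k : nat).
Implicit Types (a b : 'I_k -> R) (u v : 'cV[R]_k).

Lemma sumr_sqr_ge0 a : 0 <= \sum_i a i ^+ 2.
Proof. by apply: sumr_ge0 => i _; rewrite sqr_ge0. Qed.

Lemma sumr_sqr_eq0 a : \sum_i a i ^+ 2 = 0 -> forall i, a i = 0.
Proof.
move=> a2_eq0 i; apply/eqP; rewrite -sqrf_eq0; apply/eqP.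
exact: (psumr_eq0P (fun j _ => sqr_ge0 (a j)) a2_eq0).
Qed.

Lemma Cauchy_Schwarz a b :
  \sum_i a i * b i <= Num.sqrt (\sum_i a i ^+ 2) * Num.sqrt (\sum_i b i ^+ 2).
Proof.
set na := Num.sqrt _; set nb := Num.sqrt _.
have na2 : na ^+ 2 = \sum_i a i ^+ 2 by rewrite sqr_sqrtr ?sumr_sqr_ge0.
have nb2 : nb ^+ 2 = \sum_i b i ^+ 2 by rewrite sqr_sqrtr ?sumr_sqr_ge0.
(* Expanding [0 <= \sum_i (a i * nb - b i * na) ^+ 2]. *)
have scaled : 2 * (na * nb) * \sum_i a i * b i <= 2 * (na * nb) * (na * nb).
  have -> : 2 * (na * nb) * (na * nb)
          = \sum_i (a i ^+ 2 * nb ^+ 2 + b i ^+ 2 * na ^+ 2).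
    by rewrite big_split /= -!mulr_suml -na2 -nb2; ring.
  rewrite mulr_sumr; apply: ler_sum => i _; rewrite -subr_ge0.
  have -> : a i ^+ 2 * nb ^+ 2 + b i ^+ 2 * na ^+ 2 - 2 * (na * nb) * (a i * b i)
          = (a i * nb - b i * na) ^+ 2 by ring.
  exact: sqr_ge0.
have nanb_ge0 : 0 <= na * nb by rewrite mulr_ge0 ?sqrtr_ge0.
have [nanb_gt0 | ] := boolP (0 < na * nb).
  by move: scaled; rewrite ler_pM2l // mulr_gt0.
rewrite lt_def nanb_ge0 andbT negbK mulf_eq0.
case/orP=> /eqP /(congr1 (fun x => x ^+ 2)); rewrite expr0n /=.
  by rewrite na2 => /sumr_sqr_eq0 a0; rewrite big1 // => i _; rewrite a0 mul0r.
by rewrite nb2 => /sumr_sqr_eq0 b0; rewrite big1 // => i _; rewrite b0 mulr0.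
Qed.

Lemma norm20 : norm2 (0 : 'cV[R]_k) = 0.
Proof. by rewrite /norm2 big1 ?sqrtr0 // => i _; rewrite mxE expr0n. Qed.

Lemma norm2N u : norm2 (- u) = norm2 u.
Proof. by rewrite /norm2; congr Num.sqrt; apply: eq_bigr => i _; rewrite mxE sqrrN. Qed.

Lemma norm2_ge0 u : 0 <= norm2 u.
Proof. exact: sqrtr_ge0. Qed.

Lemma norm2_sqr u : norm2 u ^+ 2 = \sum_i u i 0 ^+ 2.
Proof. by rewrite sqr_sqrtr ?sumr_sqr_ge0. Qed.

Lemma ler_norm2D u v : norm2 (u + v) <= norm2 u + norm2 v.
Proof.
rewrite -ler_sqr ?nnegrE ?addr_ge0 ?norm2_ge0 //.
have -> : norm2 (u + v) ^+ 2
        = norm2 u ^+ 2 + (\sum_i u i 0 * v i 0) *+ 2 + norm2 v ^+ 2.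
  rewrite !norm2_sqr -sumrMnl -!big_split /=.
  by apply: eq_bigr => i _; rewrite mxE; ring.
by rewrite sqrrD lerD2r lerD2l lerMn2r Cauchy_Schwarz.
Qed.

Lemma ler_norm2_subD u v : norm2 v <= norm2 (u + v) + norm2 u.
Proof.
by rewrite -(norm2N u); apply: le_trans (ler_norm2D _ _); rewrite addrC addKr.
Qed.

End EuclideanNorm.

Lemma sum_norm2_le_sum_norm2D (R : rcfType) (k : nat) (I : eqType) (r : seq I)
    (g d : I -> 'cV[R]_k) :
  \sum_(t <- r | d t != 0) norm2 (g t) <= \sum_(t <- r | d t == 0) norm2 (g t) ->
  \sum_(t <- r) norm2 (d t) <= \sum_(t <- r) norm2 (g t + d t).
Proof.
move=> g_K_le_g_Kc.
rewrite [X in X <= _](bigID (fun t => d t == 0)) /=.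
rewrite [X in _ <= X](bigID (fun t => d t == 0)) /=.
rewrite big1 => [|t /eqP ->]; last exact: norm20.
rewrite add0r [X in _ <= X + _](eq_bigr (fun t => norm2 (g t))) => [|t /eqP ->];
  last by rewrite addr0.
have d_le : \sum_(t <- r | d t != 0) norm2 (d t)
         <= \sum_(t <- r | d t != 0) (norm2 (g t + d t) + norm2 (g t)).
  by apply: ler_sum => t _; exact: ler_norm2_subD.
by apply: le_trans d_le _; rewrite big_split /= addrC lerD2r.
Qed.

Theorem corollary1 (R : rcfType) (n m T : nat) (f : 'cV[R]_n -> 'cV[R]_m)
    (Abar : 'M[R]_(n, m)) (d : nat -> 'cV[R]_n) :
  (forall Z : 'M[R]_(m, n),
     \sum_(0 <= t < T | d t != 0) norm2 (Z^T *m f (traj f Abar d t))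
     <= \sum_(0 <= t < T | d t == 0) norm2 (Z^T *m f (traj f Abar d t))) ->
  forall A : 'M[R]_(n, m),
    \sum_(0 <= t < T) norm2 ((Abar - A) *m f (traj f Abar d t) + d t)
    >= \sum_(0 <= t < T) norm2 ((Abar - Abar) *m f (traj f Abar d t) + d t).
Proof.
move=> hyp A.
under eq_bigr do rewrite subrr mul0mx add0r.
apply: sum_norm2_le_sum_norm2D.
by have := hyp (Abar - A)^T; rewrite trmxK.
Qed.
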